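(* Consider the system $\dot q=Mp$, $\dot p=-M^Tq-\nabla\psi(p)+Bu$ with $q,p\in\mathbb R^n$, where $M\in\mathbb R^{n\times n}$ is invertible, $B\in\mathbb R^{n\times m}$, and $\psi:\mathbb R^n\to\mathbb R$ is continuously differentiable with locally Lipschitz gradient, strictly convex, and satisfies $\lim_{\|x\|\to\infty}\psi(x)/\|x\|=\infty$. If the input $u\equiv\mathrm u\in\mathbb R^m$ is constant, then every trajectory satisfies $p(t)\to p_0=0$ and $q(t)\to q_0=(M^T)^{-1}B\mathrm u-(M^T)^{-1}\nabla\psi(0)$ as $t\to\infty$. *)

From Stdlib Require Import Reals Lra.
Open Scope R_scope.

(* Vectors of R^n are represented as functions nat -> R, of which only the
   entries with index i < n are meaningful; matrices as nat -> nat -> R. *)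

Fixpoint rsum (n : nat) (f : nat -> R) : R :=
  match n with
  | O => 0
  | S k => rsum k f + f k
  end.

Definition dot (n : nat) (x y : nat -> R) : R := rsum n (fun i => x i * y i).
Definition vnorm (n : nat) (x : nat -> R) : R := sqrt (dot n x x).
Definition vsub (x y : nat -> R) : nat -> R := fun i => x i - y i.
Definition vcomb (a : R) (x : nat -> R) (b : R) (y : nat -> R) : nat -> R :=
  fun i => a * x i + b * y i.
Definition zerov : nat -> R := fun _ => 0.

Definition matvec (cols : nat) (A : nat -> nat -> R) (x : nat -> R) : nat -> R :=
  fun i => rsum cols (fun j => A i j * x j).
Definition matTvec (n : nat) (A : nat -> nat -> R) (x : nat -> R) : nat -> R :=
  fun i => rsum n (fun j => A j i * x j).

Definition is_inverse (n : nat) (A Ainv : nat -> nat -> R) : Prop :=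
  forall i j, (i < n)%nat -> (j < n)%nat ->
    rsum n (fun k => A i k * Ainv k j) = (if Nat.eqb i j then 1 else 0) /\
    rsum n (fun k => Ainv i k * A k j) = (if Nat.eqb i j then 1 else 0).

Definition invertible (n : nat) (A : nat -> nat -> R) : Prop :=
  exists Ainv, is_inverse n A Ainv.

Definition has_gradient_at (n : nat) (psi : (nat -> R) -> R)
    (g : (nat -> R) -> (nat -> R)) (x : nat -> R) : Prop :=
  forall eps, 0 < eps -> exists delta, 0 < delta /\
    forall y, vnorm n (vsub y x) < delta ->
      Rabs (psi y - psi x - dot n (g x) (vsub y x)) <= eps * vnorm n (vsub y x).

Definition vcontinuous_at (n : nat) (g : (nat -> R) -> (nat -> R)) (x : nat -> R) : Prop :=
  forall eps, 0 < eps -> exists delta, 0 < delta /\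
    forall y, vnorm n (vsub y x) < delta -> vnorm n (vsub (g y) (g x)) < eps.

Definition C1_with_gradient (n : nat) (psi : (nat -> R) -> R)
    (g : (nat -> R) -> (nat -> R)) : Prop :=
  forall x, has_gradient_at n psi g x /\ vcontinuous_at n g x.

Definition locally_lipschitz (n : nat) (g : (nat -> R) -> (nat -> R)) : Prop :=
  forall x, exists r L, 0 < r /\
    forall y z, vnorm n (vsub y x) < r -> vnorm n (vsub z x) < r ->
      vnorm n (vsub (g y) (g z)) <= L * vnorm n (vsub y z).

Definition vneq (n : nat) (x y : nat -> R) : Prop :=
  exists i, (i < n)%nat /\ x i <> y i.

Definition strictly_convex (n : nat) (psi : (nat -> R) -> R) : Prop :=
  forall x y lam, vneq n x y -> 0 < lam < 1 ->
    psi (vcomb lam x (1 - lam) y) < lam * psi x + (1 - lam) * psi y.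

Definition superlinear (n : nat) (psi : (nat -> R) -> R) : Prop :=
  forall K, exists Rr, 0 < Rr /\
    forall x, Rr <= vnorm n x -> K <= psi x / vnorm n x.

Definition vconverges (n : nat) (v : R -> nat -> R) (v0 : nat -> R) : Prop :=
  forall eps, 0 < eps -> exists T, forall t, T <= t -> vnorm n (vsub (v t) v0) < eps.

From Stdlib Require Import Reals Lra Lia ClassicalEpsilon Classical.
Open Scope R_scope.

(* With [q_eq] the equilibrium, the energy [V = |q - q_eq|^2/2 + |p|^2/2] satisfies
   [V' = - <grad psi p - grad psi 0, p>], which is [<= 0] and vanishes only at [p = 0]
   by strict convexity.  Hence the trajectory stays in a box, and on that box the
   dissipation rate is bounded below by a positive constant wherever [|p_i|] is bounded
   below (compactness and continuity).  As [p] is Lipschitz, infinitely many excursions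
   of [|p_i|] above a level would each cost [V] a fixed amount, so [p -> 0].  Then
   [p' = - M^T (q - q_eq) - (grad psi p - grad psi 0)] with [p] and the last term
   vanishing and [M^T (q - q_eq)] Lipschitz forces [M^T (q - q_eq) -> 0], and inverting
   [M^T] gives [q -> q_eq]. *)

Lemma Rabs_le_between x a : Rabs x <= a -> - a <= x <= a.
Proof.
  intros H. pose proof (Rle_abs x). pose proof (Rle_abs (- x)).
  rewrite Rabs_Ropp in *. lra.
Qed.

Lemma mul_div_succ_lt A e : 0 <= A -> 0 < e -> A * (e / (A + 1)) < e.
Proof.
  intros HA He. apply Rmult_lt_reg_r with (A + 1); [lra|].
  replace (A * (e / (A + 1)) * (A + 1)) with (A * e) by (field; lra). nra.
Qed.

Lemma Rabs_le_of_sqr_le x a : x * x <= a -> Rabs x <= a + 1.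
Proof.
  intros H. destruct (Rle_lt_dec (Rabs x) 1); [nra|].
  rewrite <- (Rabs_pos_eq (x * x)), Rabs_mult in H by apply Rle_0_sqr. nra.
Qed.

Lemma rsum_ext N f g : (forall i, (i < N)%nat -> f i = g i) -> rsum N f = rsum N g.
Proof.
  induction N as [|N IH]; intros H; simpl; auto.
  rewrite IH by (intros; apply H; lia). rewrite H by lia. reflexivity.
Qed.

Lemma rsum_plus N f g : rsum N (fun i => f i + g i) = rsum N f + rsum N g.
Proof. induction N as [|N IH]; simpl; [lra|]. rewrite IH; lra. Qed.

Lemma rsum_minus N f g : rsum N (fun i => f i - g i) = rsum N f - rsum N g.
Proof. induction N as [|N IH]; simpl; [lra|]. rewrite IH; lra. Qed.

Lemma rsum_opp N f : rsum N (fun i => - f i) = - rsum N f.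
Proof. induction N as [|N IH]; simpl; [lra|]. rewrite IH; lra. Qed.

Lemma rsum_scal N c f : rsum N (fun i => c * f i) = c * rsum N f.
Proof. induction N as [|N IH]; simpl; [lra|]. rewrite IH; lra. Qed.

Lemma rsum_const N c : rsum N (fun _ => c) = INR N * c.
Proof. induction N as [|N IH]; [simpl; lra|]. cbn [rsum]. rewrite IH, S_INR. lra. Qed.

Lemma rsum_swap N K (f : nat -> nat -> R) :
  rsum N (fun i => rsum K (fun j => f i j)) = rsum K (fun j => rsum N (fun i => f i j)).
Proof.
  induction N as [|N IH]; simpl.
  - rewrite rsum_const. lra.
  - rewrite IH, <- rsum_plus. reflexivity.
Qed.

Lemma rsum_le N f g : (forall i, (i < N)%nat -> f i <= g i) -> rsum N f <= rsum N g.
Proof.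
  induction N as [|N IH]; intros H; simpl; [lra|].
  assert (f N <= g N) by (apply H; lia).
  assert (rsum N f <= rsum N g) by (apply IH; intros; apply H; lia). lra.
Qed.

Lemma rsum_nonneg N f : (forall i, (i < N)%nat -> 0 <= f i) -> 0 <= rsum N f.
Proof.
  intros H. replace 0 with (rsum N (fun _ => 0)) by (rewrite rsum_const; ring).
  apply rsum_le; auto.
Qed.

Lemma rsum_term N f i : (forall j, (j < N)%nat -> 0 <= f j) -> (i < N)%nat -> f i <= rsum N f.
Proof.
  induction N as [|N IH]; intros H Hi; [lia|]. simpl.
  assert (0 <= f N) by (apply H; lia).
  assert (0 <= rsum N f) by (apply rsum_nonneg; intros; apply H; lia).
  destruct (Nat.eq_dec i N) as [->|Hne]; [lra|].
  assert (f i <= rsum N f) by (apply IH; [intros; apply H | ]; lia). lra.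
Qed.

Lemma rsum_bound N f c : (forall i, (i < N)%nat -> Rabs (f i) <= c) -> Rabs (rsum N f) <= INR N * c.
Proof.
  intros H. rewrite <- rsum_const.
  apply Rle_trans with (rsum N (fun i => Rabs (f i))); [|apply rsum_le; auto].
  clear H. induction N as [|N IH]; simpl; [rewrite Rabs_R0; lra|].
  eapply Rle_trans; [apply Rabs_triang|]. lra.
Qed.

Lemma rsum_prod_bound N a x A X : 0 <= A ->
  (forall i, (i < N)%nat -> Rabs (a i) <= A) -> (forall i, (i < N)%nat -> Rabs (x i) <= X) ->
  Rabs (rsum N (fun i => a i * x i)) <= INR N * (A * X).
Proof.
  intros HA Ha Hx. apply rsum_bound. intros i Hi. rewrite Rabs_mult.
  apply Rmult_le_compat; auto using Rabs_pos.
Qed.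

Lemma rsum_delta N (x : nat -> R) i : (i < N)%nat ->
  rsum N (fun k => (if Nat.eqb k i then 1 else 0) * x k) = x i.
Proof.
  induction N as [|N IH]; intros Hi; [lia|]. simpl.
  destruct (Nat.eq_dec i N) as [->|Hne].
  - rewrite Nat.eqb_refl, (rsum_ext N _ (fun _ => 0)), rsum_const; [lra|].
    intros j Hj. destruct (Nat.eqb_spec j N); [lia|lra].
  - rewrite IH by lia. destruct (Nat.eqb_spec N i); [lia|lra].
Qed.

Lemma rsum_deriv N (F : nat -> R -> R) (F' : nat -> R) t :
  (forall i, (i < N)%nat -> derivable_pt_lim (F i) t (F' i)) ->
  derivable_pt_lim (fun s => rsum N (fun i => F i s)) t (rsum N F').
Proof.
  induction N as [|N IH]; intros H; simpl.
  - apply (derivable_pt_lim_const 0 t).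
  - apply (derivable_pt_lim_plus (fun s => rsum N (fun i => F i s)) (F N));
      [apply IH; intros|]; apply H; lia.
Qed.

Lemma matrix_entries_bounded n (A : nat -> nat -> R) :
  exists C, 0 <= C /\ forall i j, (i < n)%nat -> (j < n)%nat -> Rabs (A i j) <= C.
Proof.
  set (row i := rsum n (fun j => Rabs (A i j))).
  assert (Hrow : forall i, 0 <= row i) by (intros; apply rsum_nonneg; intros; apply Rabs_pos).
  exists (rsum n row). split; [apply rsum_nonneg; auto|].
  intros i j Hi Hj. apply Rle_trans with (row i).
  - apply (rsum_term n (fun j => Rabs (A i j))); auto using Rabs_pos.
  - apply rsum_term; auto.
Qed.

Lemma dot_ext N x y x' y' : (forall i, (i < N)%nat -> x i = x' i) ->
  (forall i, (i < N)%nat -> y i = y' i) -> dot N x y = dot N x' y'.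
Proof. intros Hx Hy. apply rsum_ext. intros i Hi. rewrite Hx, Hy; auto. Qed.

Lemma dot_scal_r N a c d : dot N a (fun i => c * d i) = c * dot N a d.
Proof. unfold dot. rewrite <- rsum_scal. apply rsum_ext; intros; ring. Qed.

Lemma vnorm_ext N x y : (forall i, (i < N)%nat -> x i = y i) -> vnorm N x = vnorm N y.
Proof. intros H. unfold vnorm. f_equal. apply dot_ext; auto. Qed.

Lemma vnorm_scal N c x : vnorm N (fun i => c * x i) = Rabs c * vnorm N x.
Proof.
  unfold vnorm, dot. rewrite (rsum_ext N _ (fun i => (c * c) * (x i * x i))) by (intros; ring).
  rewrite rsum_scal, sqrt_mult, <- sqrt_Rsqr_abs; auto.
  - apply Rle_0_sqr.
  - apply rsum_nonneg; intros; apply Rle_0_sqr.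
Qed.

Lemma coord_le_vnorm N x i : (i < N)%nat -> Rabs (x i) <= vnorm N x.
Proof.
  intros Hi. unfold vnorm. rewrite <- sqrt_Rsqr_abs. apply sqrt_le_1_alt.
  apply (rsum_term N (fun i => x i * x i)); auto. intros; apply Rle_0_sqr.
Qed.

Lemma vneq_vnorm_pos N x y : vneq N x y -> 0 < vnorm N (vsub x y).
Proof.
  intros [i [Hi Hxy]]. eapply Rlt_le_trans; [|apply (coord_le_vnorm _ _ i Hi)].
  apply Rabs_pos_lt. unfold vsub. lra.
Qed.

Lemma vnorm_le_coord_bound N x a : 0 <= a -> (forall i, (i < N)%nat -> Rabs (x i) <= a) ->
  vnorm N x <= INR N * a.
Proof.
  intros Ha H. assert (HN : 0 <= INR N) by apply pos_INR.
  unfold vnorm. rewrite <- (sqrt_Rsqr (INR N * a)) by nra. apply sqrt_le_1_alt.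
  apply Rle_trans with (rsum N (fun _ => a * a)).
  - apply rsum_le. intros i Hi. specialize (H i Hi).
    rewrite <- (Rabs_pos_eq (x i * x i)), Rabs_mult by apply Rle_0_sqr.
    apply Rmult_le_compat; auto using Rabs_pos.
  - rewrite rsum_const. unfold Rsqr. destruct N as [|N]; [simpl; lra|].
    assert (1 <= INR (S N)) by (rewrite S_INR; pose proof (pos_INR N); lra). nra.
Qed.

(* The [INR N + 1] (rather than [INR N]) keeps the bound meaningful for [N = 0]. *)
Lemma vnorm_lt_of_coord N x d : 0 < d ->
  (forall i, (i < N)%nat -> Rabs (x i) < d / (INR N + 1)) -> vnorm N x < d.
Proof.
  intros Hd H. assert (HN : 0 <= INR N) by apply pos_INR.
  assert (Ea : d = d / (INR N + 1) * (INR N + 1)) by (field; lra).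
  assert (0 < d / (INR N + 1)) by (apply Rdiv_lt_0_compat; lra).
  eapply Rle_lt_trans; [apply (vnorm_le_coord_bound N x (d / (INR N + 1))); [lra|]|].
  - intros i Hi. left. auto.
  - rewrite Ea at 2. nra.
Qed.

Section Convexity.
Variables (n : nat) (psi : (nat -> R) -> R) (g : (nat -> R) -> (nat -> R)).
Hypothesis psi_grad : forall x, has_gradient_at n psi g x.
Hypothesis psi_strict : strictly_convex n psi.

Lemma grad_ineq x y : vneq n y x -> psi x + dot n (g x) (vsub y x) <= psi y.
Proof.
  intros Hne. apply Rle_plus_epsilon. intros e He.
  set (G := dot n (g x) (vsub y x)).
  set (nd := vnorm n (vsub y x)).
  assert (Hnd : 0 < nd) by (apply vneq_vnorm_pos; auto).
  destruct (psi_grad x (e / nd)) as [d [Hd Hdiff]]; [apply Rdiv_lt_0_compat; auto|].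
  set (lam := Rmin (1/2) (d / (2 * nd))).
  assert (Hlam : 0 < lam < 1).
  { split; [apply Rmin_pos; [lra|apply Rdiv_lt_0_compat; lra]|].
    pose proof (Rmin_l (1/2) (d / (2 * nd))). unfold lam. lra. }
  assert (Hlam_d : lam * nd < d).
  { assert (lam * nd <= d / (2 * nd) * nd) by (apply Rmult_le_compat_r; [lra|apply Rmin_r]).
    assert (d / (2 * nd) * nd = d / 2) by (field; lra). lra. }
  set (z := vcomb lam y (1 - lam) x).
  assert (Hzx : forall i, (i < n)%nat -> vsub z x i = lam * vsub y x i)
    by (intros; unfold vsub, z, vcomb; ring).
  assert (Hnz : vnorm n (vsub z x) = lam * nd).
  { rewrite (vnorm_ext n _ _ Hzx), vnorm_scal, Rabs_pos_eq by lra. reflexivity. }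
  assert (HGz : dot n (g x) (vsub z x) = lam * G).
  { rewrite (dot_ext n _ _ (g x) (fun i => lam * vsub y x i)) by auto. apply dot_scal_r. }
  specialize (Hdiff z). rewrite Hnz, HGz in Hdiff. specialize (Hdiff Hlam_d).
  assert (Hlin : lam * G - lam * e <= psi z - psi x).
  { replace (lam * e) with (e / nd * (lam * nd)) by (field; lra).
    apply Rabs_le_between in Hdiff. lra. }
  pose proof (psi_strict y x lam Hne Hlam) as Hconv. fold z in Hconv.
  assert (lam * (G - e) < lam * (psi y - psi x)) by lra.
  apply Rmult_lt_reg_l in H; lra.
Qed.

Lemma grad_ineq_strict x y : vneq n y x -> psi x + dot n (g x) (vsub y x) < psi y.
Proof.
  intros Hne. set (z := vcomb (1/2) y (1 - 1/2) x).
  assert (Hzx : vneq n z x).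
  { destruct Hne as [i [Hi Hyx]]. exists i. split; auto. unfold z, vcomb. lra. }
  pose proof (psi_strict y x (1/2) Hne ltac:(lra)) as Hconv. fold z in Hconv.
  pose proof (grad_ineq x z Hzx) as Hgz.
  rewrite (dot_ext n _ _ (g x) (fun i => (1/2) * vsub y x i)), dot_scal_r in Hgz
    by (intros; unfold z, vsub, vcomb; ring).
  lra.
Qed.

(* [<g x - g 0, x>]: the dissipation rate of the energy along a trajectory. *)
Definition grad_gap (x : nat -> R) := dot n (vsub (g x) (g zerov)) x.

Lemma grad_gap_pos x : vneq n x zerov -> 0 < grad_gap x.
Proof.
  intros Hne.
  assert (Hne' : vneq n zerov x) by (destruct Hne as [i [Hi H]]; exists i; auto).
  pose proof (grad_ineq_strict zerov x Hne) as H0x.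
  pose proof (grad_ineq_strict x zerov Hne') as Hx0.
  rewrite (dot_ext n _ _ (g zerov) x) in H0x by (intros; unfold vsub, zerov; ring).
  rewrite (dot_ext n _ _ (g x) (fun i => (-1) * x i)), dot_scal_r in Hx0
    by (intros; unfold vsub, zerov; ring).
  unfold grad_gap, dot, vsub. rewrite (rsum_ext n _ (fun i => g x i * x i - g zerov i * x i))
    by (intros; ring).
  rewrite rsum_minus. fold (dot n (g x) x) (dot n (g zerov) x). lra.
Qed.

Lemma grad_gap_nonneg x : 0 <= grad_gap x.
Proof.
  destruct (classic (vneq n x zerov)) as [Hne|Heq]; [left; apply grad_gap_pos; auto|].
  right. symmetry. unfold grad_gap, dot. rewrite (rsum_ext n _ (fun _ => 0)).
  - rewrite rsum_const. ring.
  - intros i Hi. destruct (Req_dec (x i) 0) as [E|E]; [rewrite E; ring|].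
    exfalso. apply Heq. exists i. auto.
Qed.
End Convexity.

Lemma inv_succ_lt eps : 0 < eps -> exists k, / (INR k + 1) < eps.
Proof.
  intros He. destruct (INR_archimed eps 1 He) as [k Hk]. exists k.
  pose proof (pos_INR k).
  apply Rmult_lt_reg_l with (INR k + 1); [lra|]. rewrite Rinv_r by lra. nra.
Qed.

Lemma inv_succ_le_INR k l : (k <= l)%nat -> / (INR l + 1) <= / (INR k + 1).
Proof.
  intros Hkl. pose proof (pos_INR k). pose proof (le_INR _ _ Hkl).
  apply Rinv_le_contravar; lra.
Qed.

Definition in_box (n : nat) (r : R) (x : nat -> R) : Prop :=
  forall i, (i < n)%nat -> Rabs (x i) <= r.

Definition rcontinuous_at (n : nat) (f : (nat -> R) -> R) (x : nat -> R) : Prop :=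
  forall eps, 0 < eps -> exists delta, 0 < delta /\
    forall y, vnorm n (vsub y x) < delta -> Rabs (f y - f x) < eps.

Definition strictly_increasing (phi : nat -> nat) : Prop := forall k, (phi k < phi (S k))%nat.

Lemma strictly_increasing_ge phi : strictly_increasing phi -> forall k, (k <= phi k)%nat.
Proof. intros H k. induction k; [lia|]. specialize (H k). lia. Qed.

Lemma strictly_increasing_mono phi : strictly_increasing phi ->
  forall a b, (a <= b)%nat -> (phi a <= phi b)%nat.
Proof. intros H a b Hab. induction Hab; [lia|]. specialize (H m). lia. Qed.

Lemma strictly_increasing_comp phi psi :
  strictly_increasing phi -> strictly_increasing psi -> strictly_increasing (fun k => phi (psi k)).
Proof.
  intros Hphi Hpsi k. specialize (Hpsi k).
  pose proof (strictly_increasing_mono phi Hphi (S (psi k)) (psi (S k)) Hpsi).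
  specialize (Hphi (psi k)). lia.
Qed.

Lemma Un_cv_subseq u l phi : strictly_increasing phi -> Un_cv u l -> Un_cv (fun k => u (phi k)) l.
Proof.
  intros Hphi Hu eps He. destruct (Hu eps He) as [N HN]. exists N. intros k Hk.
  apply HN. pose proof (strictly_increasing_ge phi Hphi k). lia.
Qed.

Lemma bounded_cv_subseq (u : nat -> R) r : (forall k, Rabs (u k) <= r) ->
  exists phi l, strictly_increasing phi /\ Un_cv (fun k => u (phi k)) l.
Proof.
  intros Hu.
  destruct (Bolzano_Weierstrass u (fun c => - r <= c <= r) (compact_P3 (- r) r)) as [l Hl].
  { intros k. apply Rabs_le_between, Hu. }
  assert (Hnear : forall k, exists s : nat -> nat,
             forall N, (N <= s N)%nat /\ Rabs (u (s N) - l) < / (INR k + 1)).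
  { intros k. apply (choice (fun N p => (N <= p)%nat /\ Rabs (u p - l) < / (INR k + 1))).
    intros N. assert (Hpos : 0 < / (INR k + 1)) by (apply Rinv_0_lt_compat; pose proof (pos_INR k); lra).
    apply (Hl (fun y => Rabs (y - l) < / (INR k + 1)) N).
    exists (mkposreal _ Hpos). intros y Hy. exact Hy. }
  destruct (choice _ Hnear) as [sel Hsel].
  set (phi := fix phi k := match k with O => sel O O | S k' => sel (S k') (S (phi k')) end).
  exists phi, l. split.
  - intros k. apply (Hsel (S k) (S (phi k))).
  - intros eps He. destruct (inv_succ_lt eps He) as [k0 Hk0]. exists k0. intros k Hk.
    assert (Hk' : Rabs (u (phi k) - l) < / (INR k + 1)) by (destruct k; apply Hsel).
    unfold R_dist. pose proof (inv_succ_le_INR _ _ Hk). lra.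
Qed.

Lemma box_cv_subseq n (x : nat -> nat -> R) r : (forall k, in_box n r (x k)) ->
  exists phi y, strictly_increasing phi /\
    forall i, (i < n)%nat -> Un_cv (fun k => x (phi k) i) (y i).
Proof.
  induction n as [|n IH]; intros Hx.
  - exists (fun k => k), (fun _ => 0). split; [intros k; lia | intros; lia].
  - destruct IH as [phi [y [Hphi Hy]]]; [intros k i Hi; apply Hx; lia|].
    destruct (bounded_cv_subseq (fun k => x (phi k) n) r) as [psi [l [Hpsi Hl]]];
      [intros k; apply Hx; lia|].
    exists (fun k => phi (psi k)), (fun i => if Nat.eqb i n then l else y i).
    split; [apply strictly_increasing_comp; auto|].
    intros i Hi. destruct (Nat.eqb_spec i n) as [->|Hne]; [exact Hl|].
    apply (Un_cv_subseq (fun k => x (phi k) i)); auto. apply Hy. lia.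
Qed.

Lemma Un_cv_coord_vnorm n (x : nat -> nat -> R) y :
  (forall i, (i < n)%nat -> Un_cv (fun k => x k i) (y i)) ->
  forall d, 0 < d -> exists N, forall k, (N <= k)%nat -> vnorm n (vsub (x k) y) < d.
Proof.
  intros Hx d Hd.
  assert (Hd' : 0 < d / (INR n + 1)) by (apply Rdiv_lt_0_compat; pose proof (pos_INR n); lra).
  assert (Hunif : forall m, (m <= n)%nat -> exists N, forall k, (N <= k)%nat ->
             forall i, (i < m)%nat -> Rabs (x k i - y i) < d / (INR n + 1)).
  { induction m as [|m IH]; intros Hm; [exists O; intros; lia|].
    destruct (IH ltac:(lia)) as [N1 H1]. destruct (Hx m ltac:(lia) _ Hd') as [N2 H2].
    exists (Nat.max N1 N2). intros k Hk i Hi.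
    destruct (Nat.eq_dec i m) as [->|Hne]; [apply H2; lia | apply H1; lia]. }
  destruct (Hunif n (le_n n)) as [N HN]. exists N. intros k Hk.
  apply vnorm_lt_of_coord; [exact Hd|]. intros i Hi. apply HN; auto.
Qed.

Section Compactness.
Variable n : nat.

Lemma vcontinuous_bounded_on_box (g : (nat -> R) -> (nat -> R)) r :
  (forall x, vcontinuous_at n g x) ->
  exists K, 0 <= K /\ forall x, in_box n r x -> forall i, (i < n)%nat -> Rabs (g x i) <= K.
Proof.
  intros Hg. apply NNPP. intros Hno.
  assert (Hbig : forall k, exists x, in_box n r x /\
                   exists i, (i < n)%nat /\ INR k < Rabs (g x i)).
  { intros k. apply NNPP. intros Hk. apply Hno. exists (INR k). split; [apply pos_INR|].
    intros x Hx i Hi. apply Rnot_lt_le. intros Hc. apply Hk. eauto. }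
  destruct (choice _ Hbig) as [xs Hxs].
  destruct (box_cv_subseq n xs r) as [phi [y [Hphi Hy]]]; [intros k; apply Hxs|].
  destruct (Hg y 1 Rlt_0_1) as [d [Hd Hgy]].
  destruct (Un_cv_coord_vnorm n (fun k => xs (phi k)) y Hy d Hd) as [N HN].
  destruct (INR_archimed 1 (vnorm n (g y) + 1) Rlt_0_1) as [k0 Hk0].
  set (k := Nat.max N k0).
  destruct (proj2 (Hxs (phi k))) as [i [Hi Hgi]].
  assert (Hclose : Rabs (g (xs (phi k)) i - g y i) < 1).
  { eapply Rle_lt_trans; [apply (coord_le_vnorm _ (vsub _ _) i Hi)|].
    apply Hgy, HN. unfold k. lia. }
  pose proof (coord_le_vnorm n (g y) i Hi).
  pose proof (Rabs_triang_inv (g (xs (phi k)) i) (g y i)).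
  assert (INR k0 <= INR (phi k)).
  { apply le_INR. pose proof (strictly_increasing_ge phi Hphi k). unfold k in *. lia. }
  lra.
Qed.

Lemma rcontinuous_pos_bounded_below (f : (nat -> R) -> R) r dl :
  (forall x, rcontinuous_at n f x) -> (forall x, vneq n x zerov -> 0 < f x) -> 0 < dl ->
  exists c, 0 < c /\ forall x, in_box n r x ->
    (exists i, (i < n)%nat /\ dl <= Rabs (x i)) -> c <= f x.
Proof.
  intros Hf Hpos Hdl. apply NNPP. intros Hno.
  assert (Hsmall : forall k, exists x, in_box n r x /\
             (exists i, (i < n)%nat /\ dl <= Rabs (x i)) /\ f x < / (INR k + 1)).
  { intros k. apply NNPP. intros Hk. apply Hno. exists (/ (INR k + 1)).
    split; [apply Rinv_0_lt_compat; pose proof (pos_INR k); lra|].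
    intros x Hx Hi. apply Rnot_lt_le. intros Hc. apply Hk. eauto. }
  destruct (choice _ Hsmall) as [xs Hxs].
  destruct (box_cv_subseq n xs r) as [phi [y [Hphi Hy]]]; [intros k; apply Hxs|].
  assert (Hy0 : vneq n y zerov).
  { destruct (Un_cv_coord_vnorm n (fun k => xs (phi k)) y Hy (dl / 2) ltac:(lra)) as [N HN].
    destruct (proj1 (proj2 (Hxs (phi N)))) as [i [Hi Hxi]].
    exists i. split; auto. unfold zerov. intros Hyi.
    pose proof (coord_le_vnorm n (vsub (xs (phi N)) y) i Hi) as Hc. pose proof (HN N (le_n N)).
    replace (vsub (xs (phi N)) y i) with (xs (phi N) i) in Hc by (unfold vsub; rewrite Hyi; ring). lra. }
  pose proof (Hpos y Hy0) as Hfy.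
  destruct (Hf y (f y / 2) ltac:(lra)) as [d [Hd Hfd]].
  destruct (Un_cv_coord_vnorm n (fun k => xs (phi k)) y Hy d Hd) as [N HN].
  destruct (inv_succ_lt (f y / 2) ltac:(lra)) as [k0 Hk0].
  set (k := Nat.max N k0).
  assert (Hclose : Rabs (f (xs (phi k)) - f y) < f y / 2) by (apply Hfd, HN; unfold k; lia).
  apply Rabs_def2 in Hclose.
  pose proof (proj2 (proj2 (Hxs (phi k)))).
  assert (/ (INR (phi k) + 1) <= / (INR k0 + 1)).
  { apply inv_succ_le_INR. pose proof (strictly_increasing_ge phi Hphi k). unfold k in *. lia. }
  lra.
Qed.
End Compactness.

Lemma grad_gap_rcontinuous n g : (forall x, vcontinuous_at n g x) ->
  forall x, rcontinuous_at n (grad_gap n g) x.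
Proof.
  intros Hg x eps He.
  set (nn := INR n). assert (Hnn : 0 <= nn) by apply pos_INR.
  set (a := vnorm n x + 1). assert (Ha : 1 <= a) by (pose proof (sqrt_pos (dot n x x)); unfold a, vnorm in *; lra).
  set (Gx := vnorm n (vsub (g x) (g zerov))). assert (HGx : 0 <= Gx) by apply sqrt_pos.
  set (eta := eps / 2 / (nn * a + 1)).
  assert (Heta : 0 < eta) by (apply Rdiv_lt_0_compat; nra).
  destruct (Hg x eta Heta) as [d [Hd Hgd]].
  set (zeta := eps / 2 / (nn * Gx + 1)).
  assert (Hzeta : 0 < zeta) by (apply Rdiv_lt_0_compat; nra).
  exists (Rmin 1 (Rmin d zeta)).
  split; [repeat apply Rmin_pos; lra|]. intros y Hy.
  pose proof (Rmin_l 1 (Rmin d zeta)) as Hm1. pose proof (Rmin_r 1 (Rmin d zeta)) as Hm2.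
  pose proof (Rmin_l d zeta) as Hm3. pose proof (Rmin_r d zeta) as Hm4.
  assert (Hyx : forall i, (i < n)%nat -> Rabs (y i - x i) <= zeta /\ Rabs (y i - x i) <= 1).
  { intros i Hi. pose proof (coord_le_vnorm n (vsub y x) i Hi). unfold vsub in *. lra. }
  assert (Hgyx : vnorm n (vsub (g y) (g x)) < eta) by (apply Hgd; lra).
  assert (Hsplit : grad_gap n g y - grad_gap n g x =
            dot n (vsub (g y) (g x)) y + dot n (vsub (g x) (g zerov)) (vsub y x)).
  { unfold grad_gap, dot, vsub. rewrite <- !rsum_minus, <- rsum_plus. apply rsum_ext; intros; ring. }
  assert (Hfirst : Rabs (dot n (vsub (g y) (g x)) y) <= nn * (eta * a)).
  { apply rsum_prod_bound; [lra| |].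
    - intros i Hi. pose proof (coord_le_vnorm n (vsub (g y) (g x)) i Hi). lra.
    - intros i Hi. pose proof (coord_le_vnorm n x i Hi). destruct (Hyx i Hi) as [_ Hyx1].
      pose proof (Rabs_triang_inv (y i) (x i)). unfold a. lra. }
  assert (Hsecond : Rabs (dot n (vsub (g x) (g zerov)) (vsub y x)) <= nn * (Gx * zeta)).
  { apply rsum_prod_bound; auto.
    - intros i Hi. apply coord_le_vnorm; auto.
    - intros i Hi. apply Hyx; auto. }
  assert (nn * (eta * a) < eps / 2)
    by (replace (nn * (eta * a)) with (nn * a * eta) by ring; apply mul_div_succ_lt; nra).
  assert (nn * (Gx * zeta) < eps / 2)
    by (replace (nn * (Gx * zeta)) with (nn * Gx * zeta) by ring; apply mul_div_succ_lt; nra).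
  rewrite Hsplit. eapply Rle_lt_trans; [apply Rabs_triang|]. lra.
Qed.

Lemma mvt_le f f' s t K : s <= t ->
  (forall c, s <= c <= t -> derivable_pt_lim f c (f' c)) ->
  (forall c, s <= c <= t -> f' c <= K) -> f t - f s <= K * (t - s).
Proof.
  intros Hst Hd Hb. destruct (Req_dec s t) as [<-|Hne]; [lra|].
  destruct (MVT_cor2 f f' s t ltac:(lra) Hd) as [c [Hc1 Hc2]].
  rewrite Hc1. specialize (Hb c ltac:(lra)). nra.
Qed.

Lemma mvt_abs_le f f' s t K : s <= t ->
  (forall c, s <= c <= t -> derivable_pt_lim f c (f' c)) ->
  (forall c, s <= c <= t -> Rabs (f' c) <= K) -> Rabs (f t - f s) <= K * (t - s).
Proof.
  intros Hst Hd Hb. destruct (Req_dec s t) as [<-|Hne]; [rewrite Rminus_diag, Rabs_R0; lra|].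
  destruct (MVT_cor2 f f' s t ltac:(lra) Hd) as [c [Hc1 Hc2]].
  rewrite Hc1, Rabs_mult, (Rabs_pos_eq (t - s)) by lra.
  apply Rmult_le_compat_r; [lra|]. apply Hb. lra.
Qed.

Definition tends0 (f : R -> R) : Prop :=
  forall eps, 0 < eps -> exists T, forall t, T <= t -> Rabs (f t) < eps.

Lemma tends0_ext f g : (forall t, f t = g t) -> tends0 f -> tends0 g.
Proof.
  intros E Hf eps He. destruct (Hf eps He) as [T HT]. exists T. intros t Ht. rewrite <- E. auto.
Qed.

Lemma tends0_abs f : tends0 f -> tends0 (fun t => Rabs (f t)).
Proof.
  intros Hf eps He. destruct (Hf eps He) as [T HT]. exists T. intros t Ht.
  rewrite Rabs_Rabsolu. auto.
Qed.

Lemma tends0_plus f g : tends0 f -> tends0 g -> tends0 (fun t => f t + g t).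
Proof.
  intros Hf Hg eps He.
  destruct (Hf (eps / 2) ltac:(lra)) as [T1 H1]. destruct (Hg (eps / 2) ltac:(lra)) as [T2 H2].
  exists (Rmax T1 T2). intros t Ht.
  pose proof (Rmax_l T1 T2). pose proof (Rmax_r T1 T2).
  eapply Rle_lt_trans; [apply Rabs_triang|].
  assert (Rabs (f t) < eps / 2) by (apply H1; lra).
  assert (Rabs (g t) < eps / 2) by (apply H2; lra). lra.
Qed.

Lemma tends0_scal c f : tends0 f -> tends0 (fun t => c * f t).
Proof.
  intros Hf eps He. pose proof (Rabs_pos c).
  destruct (Hf (eps / (Rabs c + 1))) as [T HT]; [apply Rdiv_lt_0_compat; lra|].
  exists T. intros t Ht. rewrite Rabs_mult.
  eapply Rle_lt_trans; [|apply (mul_div_succ_lt (Rabs c) eps); auto].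
  apply Rmult_le_compat_l; [lra|]. left. auto.
Qed.

Lemma tends0_rsum N (F : nat -> R -> R) : (forall k, (k < N)%nat -> tends0 (F k)) ->
  tends0 (fun t => rsum N (fun k => F k t)).
Proof.
  induction N as [|N IH]; intros HF.
  - intros eps He. exists 0. intros. simpl. rewrite Rabs_R0. auto.
  - apply tends0_plus; [apply IH; intros|]; apply HF; lia.
Qed.

Lemma vconverges_of_coord n v v0 :
  (forall i, (i < n)%nat -> tends0 (fun t => v t i - v0 i)) -> vconverges n v v0.
Proof.
  intros Hv eps He.
  destruct (tends0_rsum n (fun i t => Rabs (v t i - v0 i)) (fun i Hi => tends0_abs _ (Hv i Hi))
              (eps / (INR n + 1))) as [T HT].
  { apply Rdiv_lt_0_compat; [|pose proof (pos_INR n)]; lra. }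
  exists T. intros t Ht. apply vnorm_lt_of_coord; auto. intros i Hi.
  eapply Rle_lt_trans; [|apply HT; eauto].
  eapply Rle_trans; [|apply Rle_abs].
  apply (rsum_term n (fun i => Rabs (v t i - v0 i))); auto using Rabs_pos.
Qed.

Lemma not_tends0_frequently f eps :
  ~ (exists T, forall t, T <= t -> Rabs (f t) < eps) ->
  forall T, exists t, T <= t /\ eps <= Rabs (f t).
Proof.
  intros Hno T. apply NNPP. intros Hnot. apply Hno. exists T. intros t Ht.
  apply Rnot_le_lt. intros Hle. apply Hnot. eauto.
Qed.

(* A nonnegative nonincreasing [V] that drops at a fixed rate whenever [|f|] stays
   above a level cannot afford infinitely many visits of the Lipschitz [f] to that
   level: each visit keeps [|f|] large on a window of fixed length. *)
Lemma tends0_of_dissipation (V f : R -> R) K : 0 < K ->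
  (forall t, 1 <= t -> 0 <= V t) ->
  (forall s t, 1 <= s -> s <= t -> V t <= V s) ->
  (forall s t, 1 <= s -> s <= t -> Rabs (f t - f s) <= K * (t - s)) ->
  (forall e, 0 < e -> exists c, 0 < c /\ forall s t, 1 <= s -> s <= t ->
     (forall r, s <= r <= t -> e <= Rabs (f r)) -> V t <= V s - c * (t - s)) ->
  tends0 f.
Proof.
  intros HK HV0 Hmono Hlip Hdiss eps He. apply NNPP. intros Hno.
  pose proof (not_tends0_frequently f eps Hno) as Hfar.
  set (tau := eps / (2 * K)).
  assert (Htau : 0 < tau) by (apply Rdiv_lt_0_compat; lra).
  assert (HKtau : K * tau = eps / 2) by (unfold tau; field; lra).
  destruct (Hdiss (eps / 2) ltac:(lra)) as [c [Hc Hdrop]].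
  assert (Hdecay : forall N, exists t, 1 <= t /\ V t <= V 1 - INR N * (c * tau)).
  { induction N as [|N [t [Ht HVt]]]; [exists 1; simpl; lra|].
    destruct (Hfar t) as [t' [Htt' Hft']].
    exists (t' + tau). split; [lra|].
    assert (V (t' + tau) <= V t' - c * (t' + tau - t')).
    { apply Hdrop; [lra|lra|]. intros r Hr.
      pose proof (Hlip t' r ltac:(lra) ltac:(lra)) as Hfr.
      pose proof (Rabs_triang_inv (f t') (f r)).
      rewrite <- Rabs_Ropp, Ropp_minus_distr in Hfr.
      assert (K * (r - t') <= K * tau) by (apply Rmult_le_compat_l; lra). lra. }
    pose proof (Hmono t t' Ht Htt'). rewrite S_INR. lra. }
  destruct (INR_archimed (c * tau) (V 1)) as [N HN]; [apply Rmult_lt_0_compat; lra|].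
  destruct (Hdecay N) as [t [Ht HVt]]. pose proof (HV0 t Ht). lra.
Qed.

(* If [f' = - a - b] with [f] and [b] vanishing, a slowly varying [a] must vanish too:
   while [|a|] is large, [f] would drift by an amount proportional to [|a|]. *)
Lemma tends0_of_deriv (f a b : R -> R) K : 0 <= K ->
  (forall t, 1 <= t -> derivable_pt_lim f t (- a t - b t)) ->
  (forall s t, 1 <= s -> s <= t -> Rabs (a t - a s) <= K * (t - s)) ->
  tends0 f -> tends0 b -> tends0 a.
Proof.
  intros HK Hf Hlip Hf0 Hb0 eps He. apply NNPP. intros Hno.
  pose proof (not_tends0_frequently a eps Hno) as Hfar.
  set (tau := eps / 4 / (K + 1)).
  assert (Htau : 0 < tau) by (apply Rdiv_lt_0_compat; lra).
  assert (HKtau : K * tau < eps / 4) by (apply mul_div_succ_lt; lra).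
  destruct (Hb0 (eps / 4) ltac:(lra)) as [T1 HT1].
  destruct (Hf0 (eps * tau / 8) ltac:(nra)) as [T2 HT2].
  destruct (Hfar (Rmax 1 (Rmax T1 T2))) as [t [Ht Hat]].
  pose proof (Rmax_l 1 (Rmax T1 T2)). pose proof (Rmax_r 1 (Rmax T1 T2)).
  pose proof (Rmax_l T1 T2). pose proof (Rmax_r T1 T2).
  destruct (MVT_cor2 f (fun s => - a s - b s) t (t + tau)) as [c [Hmvt Hc]]; [lra| |].
  { intros c Hc. apply Hf. lra. }
  assert (Hdrift : Rabs (f (t + tau) - f t) < eps * tau / 4).
  { assert (Rabs (f (t + tau)) < eps * tau / 8) by (apply HT2; lra).
    assert (Rabs (f t) < eps * tau / 8) by (apply HT2; lra).
    eapply Rle_lt_trans; [apply Rabs_triang|]. rewrite Rabs_Ropp. lra. }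
  assert (Hac : 3 * eps / 4 < Rabs (a c)).
  { pose proof (Hlip t c ltac:(lra) ltac:(lra)) as Hatc.
    assert (K * (c - t) <= K * tau) by (apply Rmult_le_compat_l; lra).
    pose proof (Rabs_triang_inv (a t) (a c)).
    rewrite <- Rabs_Ropp, Ropp_minus_distr in Hatc. lra. }
  assert (Hbc : Rabs (b c) < eps / 4) by (apply HT1; lra).
  assert (Hsum : eps / 2 < Rabs (- a c - b c)).
  { pose proof (Rabs_triang_inv (- a c) (b c)) as Htri. rewrite Rabs_Ropp in Htri. lra. }
  rewrite Hmvt, Rabs_mult, (Rabs_pos_eq (t + tau - t)) in Hdrift by lra.
  replace (t + tau - t) with tau in Hdrift by ring. nra.
Qed.

Lemma derivable_pt_lim_half_sqr_sum f g t a b :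
  derivable_pt_lim f t a -> derivable_pt_lim g t b ->
  derivable_pt_lim (fun s => / 2 * (f s * f s + g s * g s)) t (f t * a + g t * b).
Proof.
  intros Hf Hg.
  replace (f t * a + g t * b) with (/ 2 * ((a * f t + f t * a) + (b * g t + g t * b))) by field.
  apply derivable_pt_lim_scal, derivable_pt_lim_plus; apply derivable_pt_lim_mult; auto.
Qed.

Section Trajectory.
Variables (n m : nat) (M B : nat -> nat -> R) (psi : (nat -> R) -> R)
  (g : (nat -> R) -> (nat -> R)) (u : nat -> R) (q p : R -> nat -> R) (Minv : nat -> nat -> R).
Hypothesis psi_C1 : C1_with_gradient n psi g.
Hypothesis psi_strict : strictly_convex n psi.
Hypothesis traj : forall t, 0 < t -> forall i, (i < n)%nat ->
  derivable_pt_lim (fun s => q s i) t (matvec n M (p t) i) /\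
  derivable_pt_lim (fun s => p s i) t (- matTvec n M (q t) i - g (p t) i + matvec m B u i).
Hypothesis M_inv : is_inverse n M Minv.

Let psi_grad x : has_gradient_at n psi g x := proj1 (psi_C1 x).
Let g_cont x : vcontinuous_at n g x := proj2 (psi_C1 x).

Definition q_eq := vsub (matTvec n Minv (matvec m B u)) (matTvec n Minv (g zerov)).
Definition Q t := vsub (q t) q_eq.
Definition F t := matTvec n M (Q t).
Definition Gp t := vsub (g (p t)) (g zerov).
Definition V t := rsum n (fun i => / 2 * (Q t i * Q t i + p t i * p t i)).

Lemma matTvec_q_eq i : (i < n)%nat -> matTvec n M q_eq i = matvec m B u i - g zerov i.
Proof.
  intros Hi. set (w k := matvec m B u k - g zerov k).
  transitivity (rsum n (fun j => rsum n (fun k => M j i * (Minv k j * w k)))).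
  { apply rsum_ext; intros j Hj. rewrite rsum_scal. f_equal.
    unfold q_eq, vsub, matTvec. rewrite <- rsum_minus. apply rsum_ext; intros; unfold w; ring. }
  rewrite rsum_swap. change (matvec m B u i - g zerov i) with (w i). rewrite <- (rsum_delta n w i Hi).
  apply rsum_ext; intros k Hk. rewrite <- (proj2 (M_inv k i Hk Hi)), Rmult_comm, <- rsum_scal.
  apply rsum_ext; intros; ring.
Qed.

Lemma Q_eq_MinvT_F t i : (i < n)%nat -> Q t i = rsum n (fun k => Minv k i * F t k).
Proof.
  intros Hi. rewrite <- (rsum_delta n (Q t) i Hi). unfold F, matTvec.
  transitivity (rsum n (fun k => rsum n (fun j => Minv k i * (M j k * Q t j)))).
  2:{ apply rsum_ext; intros. apply rsum_scal. }
  rewrite rsum_swap. apply rsum_ext; intros j Hj. rewrite <- (proj1 (M_inv j i Hj Hi)).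
  rewrite Rmult_comm, <- rsum_scal. apply rsum_ext; intros; ring.
Qed.

Lemma deriv_Q t i : 0 < t -> (i < n)%nat ->
  derivable_pt_lim (fun s => Q s i) t (matvec n M (p t) i).
Proof.
  intros Ht Hi. replace (matvec n M (p t) i) with (matvec n M (p t) i - 0) by ring.
  apply derivable_pt_lim_minus; [apply traj; auto | apply derivable_pt_lim_const].
Qed.

Lemma deriv_p t i : 0 < t -> (i < n)%nat ->
  derivable_pt_lim (fun s => p s i) t (- F t i - Gp t i).
Proof.
  intros Ht Hi.
  replace (- F t i - Gp t i) with (- matTvec n M (q t) i - g (p t) i + matvec m B u i);
    [apply traj; auto|].
  assert (E : matTvec n M (q t) i = F t i + matTvec n M q_eq i).
  { unfold F, Q, vsub, matTvec. rewrite <- rsum_plus. apply rsum_ext; intros; ring. }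
  rewrite E, matTvec_q_eq by auto. unfold Gp, vsub. ring.
Qed.

(* Along a trajectory the energy dissipates exactly through [grad_gap]; the
   coupling terms [<Q, M p>] and [<p, M^T Q>] cancel. *)
Lemma deriv_V t : 0 < t -> derivable_pt_lim V t (- grad_gap n g (p t)).
Proof.
  intros Ht.
  replace (- grad_gap n g (p t))
    with (rsum n (fun i => Q t i * matvec n M (p t) i + p t i * (- F t i - Gp t i))).
  { apply (rsum_deriv n (fun i s => / 2 * (Q s i * Q s i + p s i * p s i))).
    intros i Hi. apply derivable_pt_lim_half_sqr_sum; [apply deriv_Q | apply deriv_p]; auto. }
  assert (Hcancel : rsum n (fun i => Q t i * matvec n M (p t) i) = rsum n (fun i => p t i * F t i)).
  { unfold matvec, F, matTvec.
    transitivity (rsum n (fun i => rsum n (fun j => Q t i * M i j * p t j))).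
    { apply rsum_ext; intros. rewrite <- rsum_scal. apply rsum_ext; intros; ring. }
    rewrite rsum_swap. apply rsum_ext; intros. rewrite <- rsum_scal. apply rsum_ext; intros; ring. }
  rewrite rsum_plus, Hcancel. unfold grad_gap, dot. fold (Gp t).
  rewrite <- rsum_plus, <- rsum_opp. apply rsum_ext; intros; ring.
Qed.

Lemma V_nonneg t : 0 <= V t.
Proof. apply rsum_nonneg. intros. nra. Qed.

Lemma V_nonincreasing s t : 0 < s -> s <= t -> V t <= V s.
Proof.
  intros Hs Hst.
  assert (V t - V s <= 0 * (t - s)); [|lra].
  apply (mvt_le V (fun c => - grad_gap n g (p c))); auto.
  - intros c Hc. apply deriv_V. lra.
  - intros c Hc. pose proof (grad_gap_nonneg n psi g psi_grad psi_strict (p c)). lra.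
Qed.

Definition traj_radius := 2 * V 1 + 1.

Lemma traj_in_box t : 1 <= t -> in_box n traj_radius (Q t) /\ in_box n traj_radius (p t).
Proof.
  intros Ht. pose proof (V_nonincreasing 1 t ltac:(lra) Ht).
  assert (Hi : forall i, (i < n)%nat -> / 2 * (Q t i * Q t i + p t i * p t i) <= V t).
  { intros i Hi. apply (rsum_term n (fun i => / 2 * (Q t i * Q t i + p t i * p t i))); auto.
    intros; nra. }
  split; intros i Hi'; specialize (Hi i Hi'); unfold traj_radius; apply Rabs_le_of_sqr_le; nra.
Qed.

Lemma p_lipschitz : exists K, 0 < K /\ forall s t i, 1 <= s -> s <= t -> (i < n)%nat ->
  Rabs (p t i - p s i) <= K * (t - s).
Proof.
  destruct (matrix_entries_bounded n M) as [CM [HCM0 HCM]].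
  destruct (vcontinuous_bounded_on_box n g traj_radius g_cont) as [Kg [HKg0 HKg]].
  assert (Hr : 0 <= traj_radius) by (pose proof (V_nonneg 1); unfold traj_radius; lra).
  set (KF := INR n * (CM * traj_radius)).
  assert (HKF : 0 <= KF) by (apply Rmult_le_pos; [apply pos_INR | nra]).
  exists (KF + 2 * Kg + 1). split; [lra|]. intros s t i Hs Hst Hi.
  apply (mvt_abs_le (fun c => p c i) (fun c => - F c i - Gp c i)); auto.
  { intros c Hc. apply deriv_p; auto; lra. }
  intros c Hc. destruct (traj_in_box c ltac:(lra)) as [HQc Hpc].
  assert (HFc : Rabs (F c i) <= KF) by (apply rsum_prod_bound; auto).
  assert (Hgc : Rabs (g (p c) i) <= Kg) by (apply HKg; auto).
  assert (Hg0 : Rabs (g zerov i) <= Kg).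
  { apply HKg; auto. intros j Hj. unfold zerov. rewrite Rabs_R0. auto. }
  apply Rabs_le_between in HFc, Hgc, Hg0. apply Rabs_le. unfold Gp, vsub. lra.
Qed.

Lemma F_lipschitz : exists K, 0 <= K /\ forall s t i, 1 <= s -> s <= t -> (i < n)%nat ->
  Rabs (F t i - F s i) <= K * (t - s).
Proof.
  destruct (matrix_entries_bounded n M) as [CM [HCM0 HCM]].
  assert (Hr : 0 <= traj_radius) by (pose proof (V_nonneg 1); unfold traj_radius; lra).
  set (KQ := INR n * (CM * traj_radius)).
  assert (HKQ : 0 <= KQ) by (apply Rmult_le_pos; [apply pos_INR | nra]).
  assert (HQlip : forall s t j, 1 <= s -> s <= t -> (j < n)%nat ->
            Rabs (Q t j - Q s j) <= KQ * (t - s)).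
  { intros s t j Hs Hst Hj.
    apply (mvt_abs_le (fun c => Q c j) (fun c => matvec n M (p c) j)); auto.
    - intros c Hc. apply deriv_Q; auto; lra.
    - intros c Hc. apply rsum_prod_bound; auto. apply traj_in_box. lra. }
  exists (INR n * (CM * KQ)). split; [apply Rmult_le_pos; [apply pos_INR | nra]|].
  intros s t i Hs Hst Hi. unfold F, matTvec. rewrite <- rsum_minus.
  rewrite (rsum_ext n _ (fun j => M j i * (Q t j - Q s j))) by (intros; ring).
  replace (INR n * (CM * KQ) * (t - s)) with (INR n * (CM * (KQ * (t - s)))) by ring.
  apply rsum_prod_bound; auto.
Qed.

Lemma p_tends0 i : (i < n)%nat -> tends0 (fun t => p t i).
Proof.
  intros Hi. destruct p_lipschitz as [K [HK Hlip]].
  apply (tends0_of_dissipation V (fun t => p t i) K); auto.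
  - intros; apply V_nonneg.
  - intros s t Hs Hst. apply V_nonincreasing; lra.
  - intros e He.
    destruct (rcontinuous_pos_bounded_below n (grad_gap n g) traj_radius e
                (grad_gap_rcontinuous n g g_cont)
                (grad_gap_pos n psi g psi_grad psi_strict) He)
      as [c [Hc Hgap]].
    exists c. split; auto. intros s t Hs Hst Hbig.
    assert (V t - V s <= - c * (t - s)); [|lra].
    apply (mvt_le V (fun r => - grad_gap n g (p r))); auto.
    + intros r Hr. apply deriv_V. lra.
    + intros r Hr. assert (c <= grad_gap n g (p r)); [|lra].
      apply Hgap; [apply traj_in_box; lra|]. exists i. auto.
Qed.

Lemma p_converges : vconverges n p zerov.
Proof.
  apply vconverges_of_coord. intros i Hi.
  apply (tends0_ext (fun t => p t i)); [intros; unfold zerov; ring | apply p_tends0; auto].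
Qed.

Lemma Gp_tends0 i : (i < n)%nat -> tends0 (fun t => Gp t i).
Proof.
  intros Hi eta Heta. destruct (g_cont zerov eta Heta) as [d [Hd Hgd]].
  destruct (p_converges d Hd) as [T HT]. exists T. intros t Ht.
  eapply Rle_lt_trans; [apply coord_le_vnorm; eauto|]. apply Hgd, HT, Ht.
Qed.

Lemma F_tends0 i : (i < n)%nat -> tends0 (fun t => F t i).
Proof.
  intros Hi. destruct F_lipschitz as [K [HK Hlip]].
  apply (tends0_of_deriv (fun t => p t i) _ (fun t => Gp t i) K); auto.
  - intros t Ht. apply deriv_p; auto. lra.
  - apply p_tends0; auto.
  - apply Gp_tends0; auto.
Qed.

Lemma q_converges : vconverges n q q_eq.
Proof.
  apply vconverges_of_coord. intros i Hi.
  apply (tends0_ext (fun t => rsum n (fun k => Minv k i * F t k))).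
  - intros t. symmetry. apply Q_eq_MinvT_F; auto.
  - apply tends0_rsum. intros k Hk. apply tends0_scal, F_tends0; auto.
Qed.
End Trajectory.

Theorem mainTheorem14
  (n m : nat) (M : nat -> nat -> R) (B : nat -> nat -> R)
  (psi : (nat -> R) -> R) (gradpsi : (nat -> R) -> (nat -> R))
  (u : nat -> R) (q p : R -> nat -> R) :
  invertible n M ->
  C1_with_gradient n psi gradpsi ->
  locally_lipschitz n gradpsi ->
  strictly_convex n psi ->
  superlinear n psi ->
  (* (q,p) is a trajectory of the system on t > 0 with constant input u *)
  (forall t, 0 < t -> forall i, (i < n)%nat ->
     derivable_pt_lim (fun s => q s i) t (matvec n M (p t) i) /\
     derivable_pt_lim (fun s => p s i) t
       (- matTvec n M (q t) i - gradpsi (p t) i + matvec m B u i)) ->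
  forall Minv, is_inverse n M Minv ->
    vconverges n p zerov /\
    vconverges n q
      (vsub (matTvec n Minv (matvec m B u)) (matTvec n Minv (gradpsi zerov))).
Proof.
  (* Invertibility is witnessed by [Minv]; local Lipschitzness and superlinearity only
     serve existence of trajectories, which is assumed here. *)
  intros _ HC1 _ Hsc _ Htraj Minv Hinv. split.
  - exact (p_converges n m M B psi gradpsi u q p Minv HC1 Hsc Htraj Hinv).
  - exact (q_converges n m M B psi gradpsi u q p Minv HC1 Hsc Htraj Hinv).
Qed.
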